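(* Let $\psi$ be an additive character of $\mathbb{F}_{q^2}$ of conductor $q^2$. Then: (a) If $g\in H'$, then $gag^{-1}\in H_0'$ and $\widetilde\psi(gag^{-1})=\widetilde\psi(a)$ for all $a\in H_0'$. (b) Let $h$ be odd. If $g\in\mathcal U\setminus H'$, then there exists $a\in H_0'$ such that $gag^{-1}\in H_0'$ but $\widetilde\psi(gag^{-1})\ne\widetilde\psi(a)$. (c) Let $h$ be even and let $\theta$ be any extension of $\widetilde\psi$ to a character of $H_1'$. If $g\in\mathcal U\setminus H'$, then there exists $a\in H_1'$ such that $gag^{-1}\in H_1'$ but $\theta(gag^{-1})\ne\theta(a)$.
   Context: Let $p$ be a prime, $q$ a power of $p$, $\ell\ne p$, and $h\ge2$ an integer. For a commutative $\mathbb{F}_q$-algebra $A$, $U_h^{2,q}(A)$ is the set of formal expressions $1+\sum_{i=1}^{2(h-1)}a_i\tau^i$ ($a_i\in A$) with multiplication obtained by extending $(a\tau^i)(b\tau^j)=ab^{q^i}\tau^{i+j}$ bi-additively, $\tau^0=1$, $\tau^k=0$ for $k>2(h-1)$. In $\mathcal U=U_h^{2,q}(\mathbb{F}_{q^2})$ define: $H_0'=\{1+\sum a_i\tau^i: a_i=0\text{ unless } i=2(h-1)\text{ or } i\text{ is odd with } i>h-1\}$; if $h$ is odd, $H'=\{1+\sum a_i\tau^i: a_i=0\text{ for all odd } i\le h-1\}$; if $h$ is even, $H'=\{1+\sum a_i\tau^i: a_i=0\text{ for odd } i<h-1,\ a_{h-1}\in\mathbb{F}_q\}$ and $H_1'=\{1+\sum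 a_i\tau^i: a_i=0\text{ unless } i=2(h-1)\text{ or } i\text{ is odd with } i\ge h-1;\ a_{h-1}\in\mathbb{F}_q\}$. An additive character $\psi\colon\mathbb{F}_{q^2}\to\overline{\mathbb{Q}}_\ell^\times$ has conductor $q^2$ if there exists $x$ with $\psi(x^q)\ne\psi(x)$; $\widetilde\psi$ is the character $1+\sum a_i\tau^i\mapsto\psi(a_{2(h-1)})$ of $H_0'$. *)

From HB Require Import structures.
From mathcomp Require Import all_boot all_order all_algebra all_field.
Set Implicit Arguments. Unset Strict Implicit. Unset Printing Implicit Defensive.
Import GRing.Theory.
Local Open Scope ring_scope.

(* Elements of U_h^{2,q}(F) are 1 + sum_{k=1}^{N} a_k tau^k with N = 2(h-1).
   They are stored as finite functions u : 'I_N -> F, with u i = a_{i+1}. *)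
Definition Nh (h : nat) : nat := (h.-1).*2.
Definition Uel (F : finFieldType) (h : nat) := {ffun 'I_(Nh h) -> F}.

Definition coef (F : finFieldType) (h : nat) (u : Uel F h) (k : nat) : F :=
  match k with
  | 0 => 1
  | k'.+1 => match insub k' with Some i => u i | None => 0 end
  end.

(* product: (a tau^i)(b tau^j) = a b^{q^i} tau^{i+j}, extended bi-additively,
   truncated above degree N *)
Definition mulU (F : finFieldType) (q h : nat) (u v : Uel F h) : Uel F h :=
  [ffun k : 'I_(Nh h) =>
     \sum_(i < k.+2) coef u i * (coef v (k.+1 - i)) ^+ (q ^ i)].

Definition oneU (F : finFieldType) (h : nat) : Uel F h := [ffun _ => 0].

Definition invU (F : finFieldType) (q h : nat) (u : Uel F h) : Uel F h :=
  odflt (oneU F h) [pick v : Uel F h | mulU q u v == oneU F h].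

Definition conjU (F : finFieldType) (q h : nat) (g a : Uel F h) : Uel F h :=
  mulU q (mulU q g a) (invU q g).

Definition inH0 (F : finFieldType) (h : nat) (u : Uel F h) : bool :=
  [forall k : 'I_(Nh h), (u k != 0) ==>
     ((k.+1 == Nh h) || (odd k.+1 && (h.-1 < k.+1)%N))].

(* H' (depending on the parity of h); F_q = {x | x^q = x} *)
Definition inH (F : finFieldType) (q h : nat) (u : Uel F h) : bool :=
  if odd h then
    [forall k : 'I_(Nh h), (odd k.+1 && (k.+1 <= h.-1)%N) ==> (u k == 0)]
  else
    [forall k : 'I_(Nh h), (odd k.+1 && (k.+1 < h.-1)%N) ==> (u k == 0)]
    && (coef u h.-1 ^+ q == coef u h.-1).

Definition inH1 (F : finFieldType) (q h : nat) (u : Uel F h) : bool :=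
  [forall k : 'I_(Nh h), (u k != 0) ==>
     ((k.+1 == Nh h) || (odd k.+1 && (h.-1 <= k.+1)%N))]
  && (coef u h.-1 ^+ q == coef u h.-1).

Definition psit (F : finFieldType) (h : nat) (psi : F -> algC) (u : Uel F h)
  : algC := psi (coef u (Nh h)).

Definition additive_char (F : finFieldType) (psi : F -> algC) : Prop :=
  (forall x y, psi (x + y) = psi x * psi y) /\ (forall x, psi x != 0).

From HB Require Import structures.
From mathcomp Require Import all_boot all_order all_algebra all_field.
From mathcomp Require Import zify.
Import GRing.Theory.
Local Open Scope ring_scope.
Set Implicit Arguments. Unset Strict Implicit. Unset Printing Implicit Defensive.

(* Write u_n for the coefficient of tau^n in u, so that (u v)_n is the sum of
   the u_i v_(n-i)^(q^i); as x^(q^2) = x, the twist only depends on the parity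
   of i.  Comparing coefficients in (g a g^-1) g = g a expresses each
   coefficient of b = g a g^-1 through cross terms g_i a_(n-i)^(q^i) and
   b_i g_(n-i)^(q^i).  Suppose the nonzero middle coefficients of a sit in odd
   degrees >= s and the odd coefficients of g vanish below r, with
   N = 2(h-1) <= s + r.  In an even degree n < s + r every cross term pairs an
   odd degree >= s with an odd degree of g below r, so b agrees with a in low
   and even degrees, and when N = s + r the top coefficient of b is
   a_N + g_r a_s^q - a_s g_r^q.
   For g in H' (s = h, r = h - 1) the top coefficient, hence psi~, is
   unchanged.  Otherwise either g has a lowest odd coefficient g_r <> 0 with
   r < h - 1, and a = (w / g_r^q) tau^(N-r) shifts the top coefficient by
   w^q - w; or h is even and g_(h-1) is not in F_q, and a = x tau^(h-1) with
   x in F_q gives g a g^-1 = a d with d in H_0' of top coefficient w^q - w.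
   Conductor q^2 provides w with psi(w^q - w) <> 1. *)

Lemma sum_antidiagonals (R : nmodType) n (T : nat -> nat -> R) :
  \sum_(i < n.+1) \sum_(j < i.+1) T j (i - j)%N =
  \sum_(j < n.+1) \sum_(k < (n - j).+1) T j k.
Proof.
elim: n => [|n IHn]; first by rewrite !big_ord1.
rewrite big_ord_recr /= IHn [RHS]big_ord_recr /= subnn big_ord1.
rewrite [\sum_(j < n.+2) _]big_ord_recr /= subnn addrA; congr (_ + _).
rewrite -big_split /=; apply: eq_bigr => j _.
by rewrite subSn ?[RHS]big_ord_recr // -ltnS ltn_ord.
Qed.

Lemma big_ord_ends (R : nmodType) n (G : nat -> R) : (0 < n)%N ->
  \sum_(i < n.+1) G i = G 0%N + G n + \sum_(i < n.+1 | (0 < i < n)%N) G i.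
Proof.
move=> n_gt0; rewrite (bigD1 ord0) //= (bigD1 ord_max) /=; last first.
  by rewrite -(inj_eq val_inj) /= -lt0n.
rewrite addrA; congr (_ + _); apply: eq_bigl => i.
rewrite -!(inj_eq val_inj) /=; have := ltn_ord i; lia.
Qed.

Lemma odd_pred n : (0 < n)%N -> odd n.-1 = ~~ odd n.
Proof. by case: n => // n _; rewrite /= negbK. Qed.

Section AdditiveCharacter.
Variables (F : finFieldType) (psi : F -> algC).
Hypothesis psi_char : additive_char psi.

Lemma additive_char_shift_neq x y : psi y != 1 -> psi (x + y) != psi x.
Proof.
have [psiD psi_nz] := psi_char.
by rewrite psiD -{2}[psi x]mulr1 (inj_eq (mulfI (psi_nz x))).
Qed.

Lemma additive_char_subr_neq1 x y : psi x != psi y -> psi (x - y) != 1.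
Proof.
have [psiD _] := psi_char.
by apply: contraNneq => psi_xy; rewrite -[x](subrK y) psiD psi_xy mul1r.
Qed.

End AdditiveCharacter.

Section UnitriangularGroup.
Variables (F : finFieldType) (q h : nat).
Hypothesis q_gt0 : (0 < q)%N.
Hypothesis exprqD : forall x y : F, (x + y) ^+ q = x ^+ q + y ^+ q.

Definition frob (i : nat) (x : F) := x ^+ (q ^ i).

Lemma frobS i x : frob i.+1 x = frob i x ^+ q.
Proof. by rewrite /frob expnSr exprM. Qed.

Lemma frob0x x : frob 0 x = x.
Proof. by rewrite /frob expr1. Qed.

Lemma frobD i x y : frob i (x + y) = frob i x + frob i y.
Proof. by elim: i => [|i IHi]; rewrite ?frobS ?IHi // !frob0x. Qed.

Lemma frobM i x y : frob i (x * y) = frob i x * frob i y.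
Proof. by rewrite /frob exprMn. Qed.

Lemma frob0 i : frob i 0 = 0.
Proof. by rewrite /frob expr0n expn_eq0 eqn0Ngt q_gt0. Qed.

Lemma frob1 i : frob i 1 = 1.
Proof. by rewrite /frob expr1n. Qed.

Lemma frobB i x y : frob i (x - y) = frob i x - frob i y.
Proof. by apply: (addIr (frob i y)); rewrite -frobD !subrK. Qed.

Lemma frob_frob i j x : frob i (frob j x) = frob (j + i) x.
Proof. by rewrite /frob -exprM expnD. Qed.

Lemma exprqB (x y : F) : (x - y) ^+ q = x ^+ q - y ^+ q.
Proof. by have := frobB 1 x y; rewrite /frob expn1. Qed.

Lemma frob_sum i n (G : 'I_n -> F) :
  frob i (\sum_(j < n) G j) = \sum_(j < n) frob i (G j).
Proof. exact: (big_morph (frob i) (frobD i) (frob0 i)). Qed.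

Local Notation N := (Nh h).
Local Notation U := (Uel F h).
Local Notation c := (@coef F h).

Lemma coef_ord (u : U) (i : 'I_N) : c u i.+1 = u i.
Proof. by rewrite /coef valK. Qed.

Lemma coef0 (u : U) : c u 0 = 1. Proof. by []. Qed.

Lemma eq_coefU (u v : U) : (forall n, (0 < n <= N)%N -> c u n = c v n) -> u = v.
Proof. by move=> eq_uv; apply/ffunP => i; rewrite -!coef_ord eq_uv //= ltn_ord. Qed.

Lemma odd_Nh : ~~ odd N.
Proof. by rewrite /Nh odd_double. Qed.

Definition mkU (f : nat -> F) : U := [ffun k : 'I_N => f k.+1].

Lemma coef_mkU f n : (0 < n <= N)%N -> c (mkU f) n = f n.
Proof. by case: n => // n lt_nN; rewrite (coef_ord _ (Ordinal lt_nN)) ffunE. Qed.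

Definition monoU (s : nat) (x : F) : U := mkU (fun n => if n == s then x else 0).

Lemma coef_monoU s x n : (0 < n <= N)%N -> c (monoU s x) n = if n == s then x else 0.
Proof. exact: coef_mkU. Qed.

Lemma coef_oneU n : (0 < n)%N -> c (oneU F h) n = 0.
Proof. by case: n => // n _; rewrite /coef; case: insubP => // i _ _; rewrite ffunE. Qed.

Local Notation mul := (@mulU F q h).

Lemma coef_mulU (u v : U) n : (n <= N)%N ->
  c (mul u v) n = \sum_(i < n.+1) c u i * frob i (c v (n - i)).
Proof.
case: n => [_|n le_nN]; first by rewrite big_ord1 /= frob1 mulr1.
by rewrite (coef_ord _ (Ordinal le_nN)) ffunE.
Qed.

Lemma mulUA (u v w : U) : mul (mul u v) w = mul u (mul v w).
Proof.
apply: eq_coefU => n /andP[_ le_nN]; rewrite !coef_mulU //.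
pose T j k := c u j * frob j (c v k) * frob (j + k) (c w (n - (j + k))).
transitivity (\sum_(i < n.+1) \sum_(j < i.+1) T j (i - j)%N).
  apply: eq_bigr => i _; have le_in : (i <= n)%N by rewrite -ltnS.
  rewrite coef_mulU ?(leq_trans le_in) // mulr_suml.
  by apply: eq_bigr => j _; rewrite /T subnKC // -ltnS.
rewrite sum_antidiagonals; apply: eq_bigr => j _.
rewrite coef_mulU ?(leq_trans (leq_subr _ _)) // frob_sum mulr_sumr.
apply: eq_bigr => k _.
by rewrite /T frobM frob_frob mulrA -subnDA [(k + j)%N]addnC.
Qed.

Lemma mulU1 (u : U) : mul u (oneU F h) = u.
Proof.
apply: eq_coefU => n /andP[n_gt0 le_nN]; rewrite coef_mulU //.
rewrite big_ord_recr /= subnn frob1 mulr1 big1 ?add0r // => i _.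
by rewrite coef_oneU ?frob0 ?mulr0 // subn_gt0.
Qed.

Lemma mul1U (u : U) : mul (oneU F h) u = u.
Proof.
apply: eq_coefU => n /andP[n_gt0 le_nN]; rewrite coef_mulU //.
rewrite big_ord_recl subn0 frob0x mul1r big1 ?addr0 // => i _.
by rewrite coef_oneU ?mul0r.
Qed.

Lemma mulU_inj (u : U) : injective (mul u).
Proof.
move=> x y eq_uxy; apply: eq_coefU.
suff eq_low : forall n, (n <= N)%N -> forall k, (k <= n)%N -> c x k = c y k.
  by move=> n /andP[_ le_nN]; exact: eq_low le_nN n (leqnn n).
elim=> [_ k|n IHn lt_nN k]; first by rewrite leqn0 => /eqP ->.
rewrite leq_eqVlt => /orP[/eqP ->|]; last by apply: IHn; exact: ltnW.
have : c (mul u x) n.+1 = c (mul u y) n.+1 by rewrite eq_uxy.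
rewrite !coef_mulU // !(big_ord_recl n.+1) !subn0 !frob0x !coef0 !mul1r.
under eq_bigr => i _ do rewrite (IHn (ltnW lt_nN) _ (leq_subr i n)).
by move/addIr.
Qed.

Lemma mulUV (g : U) : mul g (invU q g) = oneU F h.
Proof.
rewrite /invU; case: pickP => [v /eqP //|no_inv].
have [f _ fK] := injF_bij (@mulU_inj g).
by have := no_inv (f (oneU F h)); rewrite /= fK eqxx.
Qed.

Lemma mulVU (g : U) : mul (invU q g) g = oneU F h.
Proof.
have invUK : invU q (invU q g) = g.
  by rewrite -[LHS]mul1U -(mulUV g) mulUA mulUV mulU1.
by rewrite -{2}invUK mulUV.
Qed.

Lemma conjU_mulr (g a : U) : mul (conjU q g a) g = mul g a.
Proof. by rewrite /conjU mulUA mulVU mulU1. Qed.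

(* Comparing coefficients in (g a g^-1) g = g a. *)
Lemma coef_conjU (g a : U) n : (0 < n <= N)%N ->
  c (conjU q g a) n = c a n
    + \sum_(i < n.+1 | (0 < i < n)%N) c g i * frob i (c a (n - i))
    - \sum_(i < n.+1 | (0 < i < n)%N) c (conjU q g a) i * frob i (c g (n - i)).
Proof.
move=> /andP[n_gt0 le_nN].
have eq_n := congr1 (c^~ n) (conjU_mulr g a); rewrite /= !coef_mulU // in eq_n.
rewrite (big_ord_ends (fun i => c (conjU q g a) i * frob i (c g (n - i)))) // in eq_n.
rewrite (big_ord_ends (fun i => c g i * frob i (c a (n - i)))) // in eq_n.
rewrite !subn0 !subnn !coef0 !frob0x !frob1 !mul1r !mulr1 in eq_n.
rewrite -addrA [c a n + _]addrC -addrA in eq_n.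
by rewrite -(addrI _ eq_n) addrK.
Qed.

Lemma coef_mul_monoU s x (d : U) n : (0 < s)%N -> (N <= s.*2)%N ->
    (forall k, (0 < k <= s)%N -> c d k = 0) -> (0 < n <= N)%N ->
  c (mul (monoU s x) d) n = c d n + (if n == s then x else 0).
Proof.
move=> s_gt0 le_N_2s d_low /andP[n_gt0 le_nN]; rewrite coef_mulU //.
rewrite (bigD1 ord0) //= subn0 frob0x mul1r; congr (_ + _).
have mono_i (i : 'I_n.+1) : i != ord0 -> c (monoU s x) i = if i == s :> nat then x else 0.
  rewrite -(inj_eq val_inj) => /= nz_i; rewrite coef_monoU //.
  by rewrite lt0n nz_i (leq_trans _ le_nN) // -ltnS.
have [lt_ns|le_sn] := ltnP n s.
  rewrite (ltn_eqF lt_ns) big1 // => i nz_i.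
  by rewrite mono_i // ltn_eqF ?mul0r // (leq_ltn_trans _ lt_ns) // -ltnS.
have lt_s_n1 : (s < n.+1)%N by [].
rewrite (bigD1 (Ordinal lt_s_n1)) /=; last by rewrite -(inj_eq val_inj) /= -lt0n.
rewrite big1 ?addr0 => [|i /andP[nz_i ne_is]]; last first.
  by rewrite -(inj_eq val_inj) /= in ne_is; rewrite mono_i // (negbTE ne_is) mul0r.
rewrite coef_monoU ?eqxx; last by rewrite s_gt0 (leq_trans le_sn le_nN).
have [lt_sn|<-] : (s < n)%N \/ s = n by lia.
  by rewrite (gtn_eqF lt_sn) d_low ?frob0 ?mulr0 //; lia.
by rewrite subnn coef0 frob1 mulr1 eqxx.
Qed.

Lemma monoU_mul_drop (b : U) s : (0 < s <= N)%N -> (N <= s.*2)%N ->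
    (forall n, (0 < n < s)%N -> c b n = 0) ->
  b = mul (monoU s (c b s)) (mkU (fun n => if n == s then 0 else c b n)).
Proof.
move=> /andP[s_gt0 le_sN] le_N_2s b_below.
have d_low k : (0 < k <= s)%N -> c (mkU (fun n => if n == s then 0 else c b n)) k = 0.
  move=> /andP[k_gt0 le_ks]; rewrite coef_mkU ?k_gt0 ?(leq_trans le_ks) //.
  by case: eqVneq => // ne_ks; rewrite b_below // k_gt0 ltn_neqAle ne_ks.
apply: eq_coefU => n n_range; rewrite coef_mul_monoU // coef_mkU //.
by case: eqVneq => [->|_]; rewrite ?add0r ?addr0.
Qed.

Definition odd_coefs_vanish_below (g : U) r :=
  forall j, odd j -> (j < r)%N -> c g j = 0.

Definition mid_coefs_odd_from (a : U) s :=
  forall i, (0 < i < N)%N -> c a i != 0 -> odd i && (s <= i)%N.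

Section ConjugateCoefficients.
Variables (g a : U) (r s : nat).
Hypothesis g_r : odd_coefs_vanish_below g r.
Hypothesis a_s : mid_coefs_odd_from a s.
Hypothesis le_N_sr : (N <= s + r)%N.

Local Notation b := (conjU q g a).

Lemma cross_coef_eq0 (u : U) j k n : (j + k)%N = n -> (0 < k)%N ->
  (n <= s + r)%N -> (n < s + r)%N \/ j != s -> (n <= s)%N || ~~ odd n ->
  (c u j != 0 -> odd j && (s <= j)%N) -> c u j = 0 \/ c g k = 0.
Proof.
move=> <- k_gt0 le_jk_sr lt_jk_sr jk_low u_j.
have [|/u_j /andP[odd_j le_sj]] := eqVneq (c u j) 0; [by left | right].
case/orP: jk_low => [? | even_jk]; first by lia.
by apply: g_r; [move: even_jk; rewrite oddD odd_j; case: odd | lia].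
Qed.

Lemma sum_cross_vanish_l (u : U) n : (n < s + r)%N -> (n <= s)%N || ~~ odd n ->
  (forall i, (0 < i < n)%N -> c u i != 0 -> odd i && (s <= i)%N) ->
  \sum_(i < n.+1 | (0 < i < n)%N) c g i * frob i (c u (n - i)) = 0.
Proof.
move=> lt_n_sr n_low u_mid; apply: big1 => i /andP[i_gt0 lt_in].
have u_ni : c u (n - i) != 0 -> odd (n - i) && (s <= n - i)%N by apply: u_mid; lia.
have [->|->] := cross_coef_eq0 (subnK (ltnW lt_in)) i_gt0 (ltnW lt_n_sr)
  (or_introl lt_n_sr) n_low u_ni.
  by rewrite frob0 mulr0.
by rewrite mul0r.
Qed.

Lemma sum_cross_vanish_r (u : U) n : (n < s + r)%N -> (n <= s)%N || ~~ odd n ->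
  (forall i, (0 < i < n)%N -> c u i != 0 -> odd i && (s <= i)%N) ->
  \sum_(i < n.+1 | (0 < i < n)%N) c u i * frob i (c g (n - i)) = 0.
Proof.
move=> lt_n_sr n_low u_mid; apply: big1 => i /andP[i_gt0 lt_in].
have u_i : c u i != 0 -> odd i && (s <= i)%N by apply: u_mid; lia.
have [->|->] := cross_coef_eq0 (subnKC (ltnW lt_in)) (ltac:(by rewrite subn_gt0))
  (ltnW lt_n_sr) (or_introl lt_n_sr) n_low u_i.
  by rewrite mul0r.
by rewrite frob0 mulr0.
Qed.

Lemma conjU_coef_low n : (0 < n < N)%N -> (n <= s)%N || ~~ odd n -> c b n = c a n.
Proof.
elim/ltn_ind: n => n IHn /andP[n_gt0 lt_nN] n_low.
have lt_n_sr : (n < s + r)%N by lia.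
have a_mid i : (0 < i < n)%N -> c a i != 0 -> odd i && (s <= i)%N.
  by move=> i_mid; apply: a_s; lia.
have b_mid i : (0 < i < n)%N -> c b i != 0 -> odd i && (s <= i)%N.
  move=> i_mid; have [i_low|] := boolP ((i <= s)%N || ~~ odd i).
    by rewrite IHn //; [exact: a_mid | lia | lia].
  by rewrite negb_or negbK -ltnNge => /andP[/ltnW -> ->].
rewrite coef_conjU; last by rewrite n_gt0 ltnW.
by rewrite sum_cross_vanish_l // sum_cross_vanish_r // subr0 addr0.
Qed.

Lemma conjU_mid_coefs_odd : mid_coefs_odd_from b s.
Proof.
move=> i i_mid; have [i_low|] := boolP ((i <= s)%N || ~~ odd i).
  by rewrite conjU_coef_low //; exact: a_s.
by rewrite negb_or negbK -ltnNge => /andP[/ltnW -> ->].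
Qed.

Lemma conjU_coef_top_lt : (N < s + r)%N -> c b N = c a N.
Proof.
move=> lt_N_sr; have [-> //|N_gt0] := posnP N.
have N_low : (N <= s)%N || ~~ odd N by rewrite odd_Nh orbT.
rewrite coef_conjU; last by rewrite N_gt0 leqnn.
rewrite sum_cross_vanish_l ?sum_cross_vanish_r ?subr0 ?addr0 //.
exact: conjU_mid_coefs_odd.
Qed.

Lemma conjU_coef_top : N = (s + r)%N -> (0 < s)%N -> (0 < r)%N ->
  c b N = c a N + c g r * frob r (c a s) - c a s * frob s (c g r).
Proof.
move=> eq_N_sr s_gt0 r_gt0.
have lt_rN : (r < N.+1)%N by lia.
have lt_sN : (s < N.+1)%N by lia.
have N_low : (N <= s)%N || ~~ odd N by rewrite odd_Nh orbT.
rewrite coef_conjU; last by apply/andP; lia.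
rewrite (bigD1 (Ordinal lt_rN)) /=; last by apply/andP; lia.
rewrite [X in _ - X](bigD1 (Ordinal lt_sN)) /=; last by apply/andP; lia.
have -> : (N - r = s)%N by lia.
have -> : (N - s = r)%N by lia.
rewrite conjU_coef_low ?leqnn //; last by apply/andP; lia.
have -> : \sum_(i < N.+1 | (0 < i < N)%N && (i != Ordinal lt_rN))
    c g i * frob i (c a (N - i)) = 0.
  apply: big1 => i /andP[i_mid]; rewrite -(inj_eq val_inj) /= => ne_ir.
  have le_iN : (i <= N)%N by lia.
  have a_Ni : c a (N - i) != 0 -> odd (N - i) && (s <= N - i)%N by apply: a_s; lia.
  have ne_Nis : (N - i)%N != s by apply: contra_neq ne_ir; lia.
  have [->|->] := cross_coef_eq0 (subnK le_iN) (ltac:(lia)) le_N_sr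
    (or_intror ne_Nis) N_low a_Ni.
    by rewrite frob0 mulr0.
  by rewrite mul0r.
have -> : \sum_(i < N.+1 | (0 < i < N)%N && (i != Ordinal lt_sN))
    c b i * frob i (c g (N - i)) = 0.
  apply: big1 => i /andP[i_mid]; rewrite -(inj_eq val_inj) /= => ne_is.
  have le_iN : (i <= N)%N by lia.
  have b_i : c b i != 0 -> odd i && (s <= i)%N by apply: conjU_mid_coefs_odd.
  have [->|->] := cross_coef_eq0 (subnKC le_iN) (ltac:(lia)) le_N_sr
    (or_intror ne_is) N_low b_i.
    by rewrite mul0r.
  by rewrite frob0 mulr0.
by rewrite !addr0.
Qed.

End ConjugateCoefficients.

Hypothesis exprqK : forall x : F, (x ^+ q) ^+ q = x.

Lemma frob_parity i x : frob i x = if odd i then x ^+ q else x.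
Proof. by elim: i => [|i IHi]; rewrite ?frob0x // frobS IHi /=; case: (odd i). Qed.

Hypothesis h_ge2 : (2 <= h)%N.

Lemma inH0P (u : U) : reflect
  (forall n, (0 < n <= N)%N -> c u n != 0 -> (n == N) || (odd n && (h.-1 < n)%N))
  (inH0 u).
Proof.
apply: (iffP forallP) => [u_H0 n /andP[n_gt0 le_nN]|u_H0 k].
  case: n n_gt0 le_nN => // n _ lt_nN.
  by rewrite (coef_ord u (Ordinal lt_nN)); exact: (implyP (u_H0 (Ordinal lt_nN))).
by apply/implyP; rewrite -coef_ord; apply: u_H0; rewrite /= ltn_ord.
Qed.

Lemma mid_coefs_odd_inH0 (u : U) s : (h.-1 < s)%N -> mid_coefs_odd_from u s -> inH0 u.
Proof.
move=> lt_hs u_s; apply/inH0P => n /andP[n_gt0 le_nN] nz_n.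
have [->|ne_nN] := eqVneq n N; first by [].
have lt_nN : (n < N)%N by rewrite ltn_neqAle ne_nN.
have /andP[-> le_sn] := u_s n (ltac:(lia)) nz_n.
by rewrite (leq_trans lt_hs le_sn) orbT.
Qed.

Lemma drop_coef_inH0 (b : U) s : (h.-1 <= s)%N -> mid_coefs_odd_from b s ->
  inH0 (mkU (fun n => if n == s then 0 else c b n)).
Proof.
move=> le_hs b_s; apply: (mid_coefs_odd_inH0 (s := s.+1)) => // i i_mid.
rewrite coef_mkU; last by lia.
case: (eqVneq i s) => [_|ne_is nz_i]; first by rewrite eqxx.
have /andP[-> le_si] := b_s i i_mid nz_i.
by rewrite ltn_neqAle eq_sym ne_is.
Qed.

Lemma inH0_mid_coefs_odd (u : U) : inH0 u -> mid_coefs_odd_from u h.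
Proof.
move/inH0P => u_H0 i /andP[i_gt0 lt_iN] nz_i.
move: (u_H0 i (ltac:(lia)) nz_i); rewrite (ltn_eqF lt_iN) /= => /andP[-> ?].
lia.
Qed.

Lemma mid_coefs_odd_inH1 (u : U) s : (h.-1 <= s)%N -> mid_coefs_odd_from u s ->
  c u h.-1 ^+ q = c u h.-1 -> inH1 q u.
Proof.
move=> le_hs u_s u_fixed; rewrite /inH1 u_fixed eqxx andbT.
apply/forallP => k; apply/implyP; rewrite -coef_ord => nz_k.
have [eq_kN|ne_kN] := eqVneq k.+1 N; first by [].
have lt_kN : (k.+1 < N)%N by rewrite ltn_neqAle ne_kN ltn_ord.
have /andP[-> le_sk] := u_s k.+1 lt_kN nz_k.
by rewrite (leq_trans le_hs le_sk) orbT.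
Qed.

Lemma inH0_inH1 (u : U) : inH0 u -> inH1 q u.
Proof.
move=> u_H0; have u_h := inH0_mid_coefs_odd u_H0.
have h1_range : (0 < h.-1 <= N)%N by rewrite /Nh; lia.
have lt_h1N : (h.-1 < N)%N by rewrite /Nh; lia.
have u_h1 : c u h.-1 = 0.
  have /inH0P u_mid := u_H0; apply/eqP; apply: contraT.
  by move=> /(u_mid _ h1_range); rewrite ltnn andbF orbF (ltn_eqF lt_h1N).
apply: (mid_coefs_odd_inH1 (leq_pred h) u_h).
by rewrite u_h1 expr0n eqn0Ngt q_gt0.
Qed.

Lemma monoU_mid_coefs_odd s x : odd s -> mid_coefs_odd_from (monoU s x) s.
Proof.
move=> odd_s i /andP[i_gt0 lt_iN]; rewrite coef_monoU; last by rewrite i_gt0 ltnW.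
by case: (eqVneq i s) => [->|]; rewrite ?odd_s ?leqnn ?eqxx.
Qed.

Lemma odd_coefs_vanishP (g : U) b : (b <= N.+1)%N ->
  reflect (odd_coefs_vanish_below g b)
          [forall k : 'I_N, (odd k.+1 && (k.+1 < b)%N) ==> (g k == 0)].
Proof.
move=> le_bN; apply: (iffP forallP) => [g_b [//|j] odd_j lt_jb|g_b k].
  have lt_jN : (j < N)%N by lia.
  by rewrite (coef_ord g (Ordinal lt_jN)); apply/eqP/(implyP (g_b _)); rewrite odd_j.
by apply/implyP => /andP[odd_k lt_kb]; rewrite -coef_ord g_b.
Qed.

Lemma inHE (g : U) : inH q g =
  [forall k : 'I_N, (odd k.+1 && (k.+1 < h.-1)%N) ==> (g k == 0)]
  && (odd h || (c g h.-1 ^+ q == c g h.-1)).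
Proof.
rewrite /inH; case: ifP => odd_h; last by [].
rewrite andbT; apply: eq_forallb => k; congr (_ ==> _).
case: (boolP (odd k.+1)) => // odd_k; rewrite leq_eqVlt; case: eqP => // eq_kh.
by move: odd_k; rewrite eq_kh odd_pred ?odd_h // (leq_trans _ h_ge2).
Qed.

Lemma inH_odd_coefs_vanish (g : U) : inH q g -> odd_coefs_vanish_below g h.-1.
Proof.
rewrite inHE => /andP[/odd_coefs_vanishP vanish _]; apply: vanish.
by rewrite /Nh; lia.
Qed.

Lemma exists_lowest_odd_coef (g : U) b :
    (exists j, [&& odd j, (j < b)%N & c g j != 0]) ->
  exists r, [/\ odd r, (r < b)%N, c g r != 0 & odd_coefs_vanish_below g r].
Proof.
move=> ex_j.
have ex_P : exists j, (fun j => [&& odd j, (j < b)%N & c g j != 0]) j := ex_j.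
case: (ex_minnP ex_P) => r /and3P[odd_r lt_rb nz_r] r_min.
exists r; split => // j odd_j lt_jr; apply/eqP; apply: contraTT (lt_jr) => nz_j.
by rewrite -leqNgt; apply: r_min; rewrite odd_j nz_j (ltn_trans lt_jr lt_rb).
Qed.

Lemma notinH_cases (g : U) : ~~ inH q g ->
  (exists r, [/\ odd r, (r < h.-1)%N, c g r != 0 & odd_coefs_vanish_below g r]) \/
  [/\ ~~ odd h, odd_coefs_vanish_below g h.-1 & c g h.-1 ^+ q != c g h.-1].
Proof.
rewrite inHE.
have [vanish|/forallPn[k]] /= :=
  boolP [forall k : 'I_N, (odd k.+1 && (k.+1 < h.-1)%N) ==> (g k == 0)].
  rewrite negb_or => /andP[even_h moved]; right; split => //.
  by apply/odd_coefs_vanishP: vanish; rewrite /Nh; lia.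
rewrite negb_imply => /andP[/andP[odd_k lt_kh] nz_k] _; left.
by apply: exists_lowest_odd_coef; exists k.+1; rewrite coef_ord nz_k lt_kh /= odd_k.
Qed.

Lemma inH0_conjU_inH (g a : U) : inH q g -> inH0 a -> inH0 (conjU q g a).
Proof.
move=> /inH_odd_coefs_vanish g_h /inH0_mid_coefs_odd a_h.
have le_N : (N <= h + h.-1)%N by rewrite /Nh; lia.
have lt_h1h : (h.-1 < h)%N by lia.
exact: mid_coefs_odd_inH0 lt_h1h (conjU_mid_coefs_odd g_h a_h le_N).
Qed.

Lemma coef_top_conjU_inH (g a : U) : inH q g -> inH0 a -> c (conjU q g a) N = c a N.
Proof.
move=> /inH_odd_coefs_vanish g_h /inH0_mid_coefs_odd a_h.
have le_N : (N <= h + h.-1)%N by rewrite /Nh; lia.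
by apply: (conjU_coef_top_lt g_h a_h le_N); rewrite /Nh; lia.
Qed.

Lemma conjU_shift_top_inH0 (g : U) r w : odd r -> (r < h.-1)%N -> c g r != 0 ->
    odd_coefs_vanish_below g r ->
  exists a : U,
    [/\ inH0 a, inH0 (conjU q g a) & c (conjU q g a) N = c a N + (w ^+ q - w)].
Proof.
move=> odd_r lt_rh nz_y g_r; set y := c g r in nz_y *.
set s := (N - r)%N; set x := w / y ^+ q.
have r_gt0 : (0 < r)%N by case: (r) odd_r.
have eq_N : N = (s + r)%N by rewrite /s /Nh; lia.
have lt_hs : (h.-1 < s)%N by rewrite /s /Nh; lia.
have odd_s : odd s by rewrite /s oddB ?(negbTE odd_Nh) ?odd_r //; rewrite /Nh; lia.
have a_s : mid_coefs_odd_from (monoU s x) s := monoU_mid_coefs_odd odd_s.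
exists (monoU s x); split; first exact: mid_coefs_odd_inH0 lt_hs a_s.
  exact: mid_coefs_odd_inH0 lt_hs (conjU_mid_coefs_odd g_r a_s (eq_leq eq_N)).
have a_at_s : c (monoU s x) s = x by rewrite coef_monoU ?eqxx //; lia.
rewrite (conjU_coef_top g_r a_s) //; try lia.
rewrite a_at_s -addrA; congr (_ + _); rewrite !frob_parity odd_r odd_s.
by rewrite /x expr_div_n exprqK mulrC !divfK ?expf_neq0.
Qed.

Lemma conjU_factor_inH1 (g : U) w : ~~ odd h -> odd_coefs_vanish_below g h.-1 ->
    c g h.-1 ^+ q != c g h.-1 ->
  exists a d : U, [/\ inH1 q a, inH1 q (conjU q g a), inH0 d,
                     conjU q g a = mul a d & c d N = w ^+ q - w].
Proof.
move=> even_h g_r moved; set r := h.-1 in g_r moved *; set y := c g r in moved *.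
have odd_r : odd r by rewrite /r odd_pred ?even_h //; lia.
have r_gt0 : (0 < r)%N by rewrite /r; lia.
have eq_N : N = (r + r)%N by rewrite /r /Nh; lia.
have lt_rN : (r < N)%N by lia.
have y_moved : y - y ^+ q != 0 by rewrite subr_eq0 eq_sym.
set x := (w ^+ q - w) / (y - y ^+ q).
have x_fixed : x ^+ q = x.
  rewrite /x expr_div_n !exprqB !exprqK -opprB -[y ^+ q - y]opprB.
  by rewrite invrN mulrNN.
set a := monoU r x; set b := conjU q g a.
have a_r : mid_coefs_odd_from a r := monoU_mid_coefs_odd odd_r.
have b_r := conjU_mid_coefs_odd g_r a_r (eq_leq eq_N).
have a_at_r : c a r = x by rewrite /a coef_monoU ?eqxx //; lia.
have a_top : c a N = 0 by rewrite /a coef_monoU ?(gtn_eqF lt_rN) //; lia.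
have b_low n : (0 < n <= r)%N -> c b n = if n == r then x else 0.
  move=> n_range; rewrite (conjU_coef_low g_r a_r (eq_leq eq_N)); try lia.
  by rewrite /a coef_monoU //; lia.
have b_top : c b N = w ^+ q - w.
  rewrite (conjU_coef_top g_r a_r (eq_leq eq_N) eq_N r_gt0 r_gt0) a_top a_at_r.
  by rewrite !frob_parity odd_r x_fixed add0r mulrC -mulrBr /x divfK.
have b_at_r : c b r = x by rewrite b_low ?eqxx //; lia.
have b_below n : (0 < n < r)%N -> c b n = 0.
  by move=> /andP[n_gt0 lt_nr]; rewrite b_low ?(ltn_eqF lt_nr) // n_gt0 ltnW.
have r_range : (0 < r <= N)%N by lia.
have := monoU_mul_drop r_range (eq_leq (etrans eq_N (addnn r))) b_below.
rewrite b_at_r; set d := mkU _ => b_split.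
exists a, d; split => //.
- apply: (mid_coefs_odd_inH1 (leqnn r) a_r).
  by rewrite coef_monoU ?eqxx //; lia.
- by apply: (mid_coefs_odd_inH1 (leqnn r) b_r); rewrite b_at_r.
- exact: drop_coef_inH0 (leqnn r) b_r.
- by rewrite coef_mkU ?(gtn_eqF lt_rN) ?b_top //; lia.
Qed.

Section Characters.
Variables (psi : F -> algC) (w : F).
Hypothesis psi_char : additive_char psi.
Hypothesis psi_w : psi (w ^+ q) != psi w.

Lemma exists_conjU_moving_psit (g : U) : odd h -> ~~ inH q g ->
  exists a : U, [/\ inH0 a, inH0 (conjU q g a) & psit psi (conjU q g a) != psit psi a].
Proof.
move=> odd_h /notinH_cases[[r [odd_r lt_rh nz_r g_r]]|[]]; last by rewrite odd_h.
have [a [a_H0 b_H0 b_top]] := conjU_shift_top_inH0 w odd_r lt_rh nz_r g_r.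
exists a; split => //; rewrite /psit b_top.
by apply: additive_char_shift_neq => //; exact: additive_char_subr_neq1.
Qed.

Lemma exists_conjU_moving_theta (g : U) (theta : U -> algC) : ~~ odd h ->
    (forall x y : U, inH1 q x -> inH1 q y -> theta (mul x y) = theta x * theta y) ->
    (forall x : U, inH1 q x -> theta x != 0) ->
    (forall a : U, inH0 a -> theta a = psit psi a) ->
    ~~ inH q g ->
  exists a : U, [/\ inH1 q a, inH1 q (conjU q g a) & theta (conjU q g a) != theta a].
Proof.
move=> even_h theta_mul theta_nz theta_psi.
have psi_shift : psi (w ^+ q - w) != 1 by exact: additive_char_subr_neq1.
case/notinH_cases => [[r [odd_r lt_rh nz_r g_r]]|[_ g_r moved]].
  have [a [a_H0 b_H0 b_top]] := conjU_shift_top_inH0 w odd_r lt_rh nz_r g_r.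
  exists a; split; try exact: inH0_inH1.
  by rewrite !theta_psi // /psit b_top additive_char_shift_neq.
have [a [d [a_H1 b_H1 d_H0 eq_b d_top]]] := conjU_factor_inH1 w even_h g_r moved.
exists a; split => //; rewrite eq_b theta_mul //; last exact: inH0_inH1.
rewrite [theta d]theta_psi // /psit d_top.
by rewrite -{2}[theta a]mulr1 (inj_eq (mulfI (theta_nz _ a_H1))).
Qed.

End Characters.

End UnitriangularGroup.

Theorem lemma2p3 (p m : nat) (F : finFieldType) (h : nat) (psi : F -> algC) :
  prime p -> (0 < m)%N -> #|F| = ((p ^ m) ^ 2)%N -> (2 <= h)%N ->
  additive_char psi ->
  (exists x : F, psi (x ^+ (p ^ m)) != psi x) ->
  [/\
   (* (a) *)
   (forall g a : Uel F h, inH (p ^ m) g -> inH0 a ->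
      inH0 (conjU (p ^ m) g a) /\ psit psi (conjU (p ^ m) g a) = psit psi a),
   (* (b) *)
   (odd h -> forall g : Uel F h, ~~ inH (p ^ m) g ->
      exists a : Uel F h, [/\ inH0 a, inH0 (conjU (p ^ m) g a) &
        psit psi (conjU (p ^ m) g a) != psit psi a]) &
   (* (c) *)
   (~~ odd h -> forall theta : Uel F h -> algC,
      (forall x y : Uel F h, inH1 (p ^ m) x -> inH1 (p ^ m) y ->
         theta (mulU (p ^ m) x y) = theta x * theta y) ->
      (forall x : Uel F h, inH1 (p ^ m) x -> theta x != 0) ->
      (forall a : Uel F h, inH0 a -> theta a = psit psi a) ->
      forall g : Uel F h, ~~ inH (p ^ m) g ->
      exists a : Uel F h, [/\ inH1 (p ^ m) a, inH1 (p ^ m) (conjU (p ^ m) g a) &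
        theta (conjU (p ^ m) g a) != theta a])].
Proof.
move=> p_prime m_gt0 cardF h_ge2 psi_char [w psi_w].
have q_gt0 : (0 < p ^ m)%N by rewrite expn_gt0 prime_gt0.
have pF : p \in [pchar F] by apply: (@card_finPcharP _ p (m * 2)); rewrite // cardF expnM.
have exprqD (x y : F) : (x + y) ^+ (p ^ m) = x ^+ (p ^ m) + y ^+ (p ^ m).
  by apply: exprDn_pchar; rewrite pnatX (pnatE _ p_prime) pF.
have exprqK (x : F) : (x ^+ (p ^ m)) ^+ (p ^ m) = x.
  by rewrite -exprM mulnn -cardF expf_card.
split.
- move=> g a g_H a_H0; split; first exact: (inH0_conjU_inH q_gt0 exprqD h_ge2 g_H a_H0).
  by rewrite /psit (coef_top_conjU_inH q_gt0 exprqD h_ge2 g_H a_H0).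
- move=> odd_h g.
  exact: (exists_conjU_moving_psit q_gt0 exprqD exprqK h_ge2 psi_char psi_w odd_h).
- move=> even_h theta theta_mul theta_nz theta_psi g.
  exact: (exists_conjU_moving_theta q_gt0 exprqD exprqK h_ge2 psi_char psi_w
    even_h theta_mul theta_nz theta_psi).
Qed.
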